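(* Let $L$ be a relational language containing infinitely many binary relation symbols and let $\mathbf H$ be a countable $L$-hypergraph (with vertex set $\omega$) universal for all countable $L$-hypergraphs. Then there exist an $L$-hypergraph $\mathbf A$ on three vertices and a colouring $c:\binom{\mathbf H}{\mathbf A}\to\omega$ such that for every tree-like embedding $f:\mathbf H\to\mathbf H$, $c$ attains every value in $\omega$ on the set of embeddings $\mathbf A\to\mathbf H$ whose image lies in $f[\omega]$.
   Context: Convention: every structure is countable, has vertex set some $n\in\omega$ or $\omega$ ordered naturally, embeddings are monotone (order-preserving) embeddings of $L$-structures; $\binom{\mathbf H}{\mathbf A}$ is the set of such embeddings $\mathbf A\to\mathbf H$. An $L$-hypergraph is an $L$-structure in which all relations are injective (no repeated vertices in tuples) and symmetric, and every tuple lies in at most one relation. For $X\subseteq\omega$, $\mathrm{tp}_{\mathbf H}(X)$ is the isomorphism type (respecting the order) of the substructure induced on $X$. An embedding $f:\mathbf H\to\mathbf H$ is tree-like if for every finite $X=\{x_0<\dots<x_m\}\subseteq\omega$, every $0\le i\le m$ and every $x>x_m$ there is $y>x_m$ with $\mathrm{tp}_{\mathbf H}(f[X]\cup\{f(y)\})=\mathrm{tp}_{\mathbf H}(X\cup\{x\})$ and $\mathrm{tp}_{\mathbf H}(\{0,\dots,f(x_0)-1,f(y)\})=\mathrm{tp}_{\mathbf H}(\{0,\dots,f(x_0)-1,f(x_i)\})$. *)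

From mathcomp Require Import all_boot.
Set Implicit Arguments. Unset Strict Implicit. Unset Printing Implicit Defensive.

Record language := Language { sym :> Type; arity : sym -> nat }.

(* A countable structure: vertex set is n (dom = Some n) or omega (dom = None),
   ordered naturally; rel s t says the tuple t (a list of vertices) is in R_s. *)
Record structure (L : language) := Structure {
  dom : option nat;
  rel : L -> seq nat -> Prop }.

Definition in_dom (d : option nat) (x : nat) : bool :=
  match d with Some n => x < n | None => true end.

Definition wf_structure L (A : structure L) : Prop :=
  forall s t, rel A s t -> size t = arity s /\ all (in_dom (dom A)) t.

Definition is_hypergraph L (A : structure L) : Prop :=
  wf_structure A /\
  (forall s t, rel A s t -> uniq t) /\
  (forall s t t', rel A s t -> perm_eq t t' -> rel A s t') /\
  (forall s s' t, rel A s t -> rel A s' t -> s = s').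

(* Monotone (order-preserving) embedding A -> B; only the values of f on dom A matter. *)
Definition is_emb L (A B : structure L) (f : nat -> nat) : Prop :=
  (forall x, in_dom (dom A) x -> in_dom (dom B) (f x)) /\
  (forall x y, in_dom (dom A) x -> in_dom (dom A) y -> x < y -> f x < f y) /\
  (forall s t, all (in_dom (dom A)) t -> (rel A s t <-> rel B s (map f t))).

Definition inf_binary (L : language) : Prop :=
  exists g : nat -> L, injective g /\ forall n, arity (g n) = 2.

Definition universal L (H : structure L) : Prop :=
  forall G : structure L, is_hypergraph G -> exists f, is_emb G H f.

Definition enum_set (X : seq nat) : seq nat := sort leq (undup X).

(* tp_H(X) = tp_H(Y) for finite X, Y : the order-preserving bijection between
   X and Y is an isomorphism of the induced substructures. *)
Definition same_tp L (H : structure L) (X Y : seq nat) : Prop :=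
  let X' := enum_set X in let Y' := enum_set Y in
  size X' = size Y' /\
  forall s (I : seq nat), all (fun i => i < size X') I ->
    (rel H s (map (nth 0 X') I) <-> rel H s (map (nth 0 Y') I)).

(* Tree-like embedding f : H -> H.  A finite set X = {x_0 < ... < x_m} is given
   as a nonempty strictly increasing list. *)
Definition tree_like L (H : structure L) (f : nat -> nat) : Prop :=
  forall (X : seq nat), X != [::] -> sorted ltn X ->
  forall i, i < size X ->
  forall x, last 0 X < x ->
  exists y, last 0 X < y /\
    same_tp H (map f X ++ [:: f y]) (X ++ [:: x]) /\
    same_tp H (iota 0 (f (head 0 X)) ++ [:: f y])
              (iota 0 (f (head 0 X)) ++ [:: f (nth 0 X i)]).

From Pilot Require Import Defs.
From mathcomp Require Import all_boot.
From Stdlib Require Import ClassicalEpsilon.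

Set Implicit Arguments.
Unset Strict Implicit.
Unset Printing Implicit Defensive.

(* Fix an injective family g of binary symbols.  Colour a triple
   (a, b, c) by the unique n such that, at the least vertex d telling a and c
   apart, the pair {d, c} carries the relation g n while {d, a} does not.
   Given a tree-like f and a colour n, universality embeds the four-vertex
   hypergraph u < v < z < w whose only edge is {u, w}, labelled g n.  Tree-
   likeness applied to X = {u, v, z}, i = 1 and x = w yields y > z such that
   (f u, f v, f z, f y) has the type of (u, v, z, w), while f y and f v look
   alike from every vertex below f u.  Then (f v, f z, f y) spans no relation
   and its least distinguishing vertex is f u, where {f u, f y} carries g n. *)

Lemma enum_set_sorted (s : seq nat) : sorted ltn s -> enum_set s = s.
Proof.
rewrite ltn_sorted_uniq_leq => /andP [s_uniq s_sorted].
by rewrite /enum_set (undup_id s_uniq) (sorted_sort leq_trans s_sorted).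
Qed.

Lemma sorted_rcons_ltn (s : seq nat) (z : nat) :
  sorted ltn s -> last 0 s < z -> sorted ltn (s ++ [:: z]).
Proof. by case: s => //= a s; rewrite cats1 rcons_path => -> /=. Qed.

Lemma sorted_iota_rcons (a b : nat) : a <= b -> sorted ltn (iota 0 a ++ [:: b]).
Proof.
case: a => [|a] a_le_b //.
apply: sorted_rcons_ltn; first exact: iota_ltn_sorted.
by rewrite -nth_last size_iota nth_iota.
Qed.

Section Types.
Variables (L : language) (H : structure L).

Lemma same_tp_sorted_rel (X Y : seq nat) :
  sorted ltn X -> sorted ltn Y -> same_tp H X Y ->
  forall s I, all (fun i => i < size X) I ->
  Defs.rel H s (map (nth 0 X) I) <-> Defs.rel H s (map (nth 0 Y) I).
Proof. by move=> sX sY; rewrite /same_tp /= !enum_set_sorted // => -[]. Qed.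

Lemma same_tp_below (a b c : nat) :
  a <= b -> a <= c -> same_tp H (iota 0 a ++ [:: b]) (iota 0 a ++ [:: c]) ->
  forall d s, d < a -> Defs.rel H s [:: d; b] <-> Defs.rel H s [:: d; c].
Proof.
move=> a_le_b a_le_c tp d s d_lt_a.
have idx : all (fun i => i < size (iota 0 a ++ [:: b])) [:: d; a].
  by rewrite /= size_cat size_iota addn1 ltnS (ltnW d_lt_a) ltnSn.
have := same_tp_sorted_rel (sorted_iota_rcons a_le_b) (sorted_iota_rcons a_le_c)
          tp s idx.
by rewrite /= !nth_cat !size_iota d_lt_a ltnn subnn /= nth_iota.
Qed.

Lemma emb_rel_mkseq (G : structure L) (h : nat -> nat) (k : nat) :
  is_emb G H h -> dom G = Some k ->
  forall s I, all (fun i => i < k) I ->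
  Defs.rel H s (map (nth 0 (mkseq h k)) I) <-> Defs.rel G s I.
Proof.
move=> [_ [_ h_rel]] domG s I I_lt.
have -> : map (nth 0 (mkseq h k)) I = map h I.
  by apply/eq_in_map => i /(allP I_lt) i_lt; rewrite nth_mkseq.
by symmetry; apply: h_rel; rewrite domG.
Qed.

End Types.

Section TreeLike.
Variables (L : language) (H : structure L) (f : nat -> nat).
Hypothesis f_mono : forall x y, x < y -> f x < f y.

Let f_homo x y : x <= y -> f x <= f y.
Proof. by rewrite leq_eqVlt => /orP [/eqP -> // | /f_mono/ltnW]. Qed.

Lemma tree_like_extend (X : seq nat) (i x : nat) :
  tree_like H f -> X != [::] -> sorted ltn X -> i < size X -> last 0 X < x ->
  exists2 y, last 0 X < y &
    (forall s I, all (fun j => j <= size X) I ->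
       Defs.rel H s (map (nth 0 (map f X ++ [:: f y])) I) <->
       Defs.rel H s (map (nth 0 (X ++ [:: x])) I)) /\
    (forall d s, d < f (head 0 X) ->
       Defs.rel H s [:: d; f y] <-> Defs.rel H s [:: d; f (nth 0 X i)]).
Proof.
move=> tl X_nil sX i_lt last_lt_x.
have [y [last_lt_y [tp_ext tp_below]]] := tl X X_nil sX i i_lt x last_lt_x.
have size_X : 0 < size X by rewrite lt0n size_eq0.
have last_map_X : last 0 (map f X) = f (last 0 X).
  by rewrite -!nth_last size_map (nth_map 0 0) // ltn_predL.
exists y => //; split.
  move=> s I I_le; apply: (same_tp_sorted_rel _ _ tp_ext).
  - apply: sorted_rcons_ltn; first exact: homo_sorted sX.
    by rewrite last_map_X f_mono.
  - exact: sorted_rcons_ltn.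
  - by rewrite size_cat size_map addn1.
have X_le j : j < size X -> head 0 X <= nth 0 X j.
  move=> j_lt; rewrite -nth0.
  exact: (sorted_leq_nth leq_trans leqnn 0 (sub_sorted ltnW sX)).
have head_lt_y : head 0 X < y.
  apply: (leq_ltn_trans _ last_lt_y); rewrite -nth_last.
  by apply: X_le; rewrite ltn_predL.
by apply: same_tp_below tp_below; [exact/ltnW/f_mono | exact/f_homo/X_le].
Qed.

End TreeLike.

Section Colouring.
Variables (L : language) (H : structure L) (g : nat -> L).

Definition first_diff (a c n : nat) : Prop :=
  exists d, (forall d' s, d' < d -> Defs.rel H s [:: d'; a] <-> Defs.rel H s [:: d'; c]) /\
            Defs.rel H (g n) [:: d; c] /\ ~ Defs.rel H (g n) [:: d; a].

Definition diff_colour (t : seq nat) : nat :=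
  epsilon (inhabits 0) (first_diff (nth 0 t 0) (nth 0 t 2)).

Hypothesis g_inj : injective g.
Hypothesis H_hyp : is_hypergraph H.

(* The distinguishing vertex is unique, and a tuple lies in at most one
   relation, so at most one colour fits. *)
Lemma first_diff_unique (a c n m : nat) :
  first_diff a c n -> first_diff a c m -> n = m.
Proof.
move=> [d1 [below1 [c1 a1]]] [d2 [below2 [c2 a2]]].
case: (ltngtP d1 d2) => [d12 | d21 | d_eq].
- by case: a1; apply/(below2 _ _ d12).
- by case: a2; apply/(below1 _ _ d21).
- subst d2; apply: g_inj; case: H_hyp => _ [_ [_ one_rel]].
  exact: one_rel c1 c2.
Qed.

Lemma diff_colourE (t : seq nat) (n : nat) :
  first_diff (nth 0 t 0) (nth 0 t 2) n -> diff_colour t = n.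
Proof.
move=> fit; apply/esym/(first_diff_unique fit).
by apply: epsilon_spec; exists n.
Qed.

End Colouring.

Definition empty_structure (L : language) (k : nat) : structure L :=
  Structure (Some k) (fun _ _ => False).

Lemma empty_hypergraph (L : language) (k : nat) :
  is_hypergraph (empty_structure L k).
Proof. by do !split => // s t []. Qed.

Lemma empty_emb (L : language) (H : structure L) (k : nat) (e : nat -> nat) :
  dom H = None ->
  (forall x y, x < k -> y < k -> x < y -> e x < e y) ->
  (forall s t, all (fun i => i < k) t -> ~ Defs.rel H s (map e t)) ->
  is_emb (empty_structure L k) H e.
Proof.
move=> domH e_mono e_free; split; first by move=> x; rewrite domH.
by split=> // s t t_lt; split=> // /(e_free s t t_lt).
Qed.

Definition edge_structure (L : language) (k : nat) (s : L) (a b : nat) : structure L :=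
  Structure (Some k) (fun s' t => s' = s /\ perm_eq t [:: a; b]).

Lemma edge_hypergraph (L : language) (k : nat) (s : L) (a b : nat) :
  arity s = 2 -> a != b -> a < k -> b < k -> is_hypergraph (edge_structure k s a b).
Proof.
move=> ar ab a_lt b_lt; split.
  move=> s' t /= [-> t_ab]; rewrite (perm_size t_ab) ar; split => //.
  by apply/allP => x; rewrite (perm_mem t_ab) !inE => /orP [] /eqP ->.
split; first by move=> s' t /= [_ t_ab]; rewrite (perm_uniq t_ab) /= inE ab.
split; last by move=> s1 s2 t /= [-> _] [-> _].
by move=> s' t t' /= [-> t_ab] t_t'; split => //; rewrite -(permPl t_t').
Qed.

Theorem corollary6p3 (L : language) (H : structure L) :
  inf_binary L ->
  dom H = None -> is_hypergraph H -> universal H ->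
  exists (A : structure L) (c : seq nat -> nat),
    dom A = Some 3 /\ is_hypergraph A /\
    forall f : nat -> nat, is_emb H H f -> tree_like H f ->
    forall n : nat, exists e : nat -> nat,
      is_emb A H e /\ (forall i, i < 3 -> exists y, e i = f y) /\
      c (mkseq e 3) = n.
Proof.
move=> [g [g_inj g_ar]] domH H_hyp H_univ.
exists (empty_structure L 3), (diff_colour H g).
split=> //; split=> [|f [_ [f_mono _]] tl n]; first exact: empty_hypergraph.
have f_lt x y : x < y -> f x < f y by apply: f_mono; rewrite domH.
have [h h_emb] := H_univ _ (@edge_hypergraph L 4 (g n) 0 3 (g_ar n) isT isT isT).
have h_rel := emb_rel_mkseq h_emb (erefl (Some 4)).
have [_ [h_mono _]] := h_emb.
have h_lt j : j < 3 -> h j < h j.+1.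
  by move=> j_lt; apply: h_mono => //=; apply: ltnW.
have X_sorted : sorted ltn [:: h 0; h 1; h 2] by rewrite /= !h_lt.
have [y z_lt_y [tp_ext tp_below]] :=
  tree_like_extend (X := [:: h 0; h 1; h 2]) (i := 1) f_lt tl isT X_sorted isT (h_lt 2 isT).
have quad_rel s I : all (fun j => j < 4) I ->
    Defs.rel H s (map (nth 0 [:: f (h 0); f (h 1); f (h 2); f y]) I) <->
    s = g n /\ perm_eq I [:: 0; 3].
  by move=> I_lt; apply: iff_trans (tp_ext s I I_lt) (h_rel s I I_lt).
exists (nth 0 [:: f (h 1); f (h 2); f y]); split; [|split].
- apply: empty_emb => // [a b | s t t_lt].
    have h1_lt_y : h 1 < y := ltn_trans (h_lt 1 isT) z_lt_y.
    by case: a b => [|[|[|a]]] [|[|[|b]]] //= _ _ _; apply: f_lt => //; exact: h_lt.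
  have tS_lt : all (fun j => j < 4) (map S t) by rewrite all_map.
  move=> rel_t.
  have [_ /perm_mem/(_ 0)] : s = g n /\ perm_eq (map S t) [:: 0; 3].
    by apply/(quad_rel s _ tS_lt); rewrite -map_comp.
  by rewrite !inE /= => /mapP [].
- by move=> [|[|[|i]]] // _; [exists (h 1) | exists (h 2) | exists y].
apply: (diff_colourE g_inj H_hyp); exists (f (h 0)) => /=; split; last split.
- by move=> d s d_lt; apply: iff_sym; apply: tp_below.
- by apply/(quad_rel _ [:: 0; 3] isT).
by move/(quad_rel _ [:: 0; 1] isT) => [_ /perm_mem/(_ 1)]; rewrite !inE.
Qed.
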